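(* Let $G\subsetneq\mathbb{R}^n$ be a domain. For all $z_1,z_2\in G$ and all $p>r\ge1$, \[ b_{G,r}(z_1,z_2)\le b_{G,p}(z_1,z_2)\le 2^{\frac1r-\frac1p}\,b_{G,r}(z_1,z_2). \] In particular, for $p\ge1$, $s_G(z_1,z_2)\le b_{G,p}(z_1,z_2)\le 2^{1-1/p}s_G(z_1,z_2)$. Moreover, if $n=2$, then for every $p\ge1$, \[ \sup\{b_{G,p}(z_1,z_2):z_1,z_2\in G\}=2^{1-1/p}. \]
   Context: For a domain $G\subsetneq\mathbb{R}^n$, $p\ge1$ and $z_1,z_2\in G$, $b_{G,p}(z_1,z_2)=\sup_{z\in\partial G}\frac{|z_1-z_2|}{\sqrt[p]{|z_1-z|^p+|z-z_2|^p}}$, and $s_G=b_{G,1}$, i.e. $s_G(z_1,z_2)=\sup_{z\in\partial G}\frac{|z_1-z_2|}{|z_1-z|+|z-z_2|}$. *)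

(* Points of R^n are row vectors 'rV[R]_n, with the
   (product = Euclidean) topology of MathComp-Analysis; distances are Euclidean. *)
From HB Require Import structures.
From mathcomp Require Import all_boot all_order all_algebra.
From mathcomp Require Import all_classical all_reals all_analysis.
Set Implicit Arguments. Unset Strict Implicit. Unset Printing Implicit Defensive.
Import Order.TTheory GRing.Theory Num.Theory numFieldNormedType.Exports.
Local Open Scope classical_set_scope.
Local Open Scope ring_scope.

Definition edist (R : realType) (n : nat) (x y : 'rV[R]_n) : R :=
  Num.sqrt (\sum_(i < n) (x ord0 i - y ord0 i) ^+ 2).

Definition bdry (R : realType) (n : nat) (A : set 'rV[R]_n) : set 'rV[R]_n :=
  closure A `\` interior A.

Definition proper_domain (R : realType) (n : nat) (G : set 'rV[R]_n) : Prop :=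
  [/\ G !=set0, open G, connected G & G != setT].

Definition bGp (R : realType) (n : nat) (G : set 'rV[R]_n) (p : R)
    (z1 z2 : 'rV[R]_n) : R :=
  sup [set edist z1 z2 /
          powR (powR (edist z1 z) p + powR (edist z z2) p) p^-1
      | z in bdry G].

Definition sG (R : realType) (n : nat) (G : set 'rV[R]_n) (z1 z2 : 'rV[R]_n) : R :=
  sup [set edist z1 z2 / (edist z1 z + edist z z2) | z in bdry G].

(* For a boundary point z put a = |z1 - z|, b = |z - z2| and d = |z1 - z2| <= a + b.
   The ratio d / (a^p + b^p)^(1/p) is nondecreasing in p, since l^p norms decrease in p,
   and by convexity of t |-> t^(p/r) it grows by at most the factor 2^(1/r - 1/p) from r
   to p; for r = 1 this bounds every ratio by 2^(1 - 1/p). Taking suprema over the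
   boundary gives the comparisons, s_G being b_{G,1}.
   In the plane the bound is approached: choose x in G, a boundary point z whose distance
   D to x is almost the distance from x to the complement of G, and the two points
   z - t^2 (z - x) +- t (z - x)^perp. They lie in the disc of radius about D centred at x,
   hence in G, and for small t the point z is almost their midpoint. *)

From HB Require Import structures.
From mathcomp Require Import all_boot all_order all_algebra.
From mathcomp Require Import all_classical all_reals all_analysis.
From mathcomp Require Import ring lra.
Import Order.TTheory GRing.Theory Num.Theory numFieldNormedType.Exports.
Local Open Scope classical_set_scope.
Local Open Scope ring_scope.

Lemma connected_meets_bdry {T : topologicalType} (A C : set T) :
  connected C -> C `&` A !=set0 -> C `\` A !=set0 ->
  C `&` (closure A `\` A°) !=set0.
Proof.
move=> cC [x [Cx Ax]] [w [Cw Aw]]; apply: contrapT => /set0P/negP/negPn/eqP CB0.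
have sep : separated A° (~` closure A).
  split; apply/seteqP; split => // y [].
    by move=> /(closureS (@interior_subset _ A)) clAy /(_ clAy).
  by move=> Ay /(_ _ Ay) [z [nAz Az]]; exact: nAz (subset_closure Az).
have CU : C `<=` A° `|` ~` closure A.
  move=> y Cy; have [Aoy|nAoy] := pselect (A° y); [by left | right => clAy].
  by have : (C `&` (closure A `\` A°)) y by []; rewrite CB0.
have [CA|CnA] := connected_subset sep CU cC.
  by apply: Aw; apply: interior_subset; exact: CA.
by apply: (CnA x Cx); exact: subset_closure.
Qed.

Lemma sup_image_le_mul {R : realType} {T : Type} (A : set T) (f g : T -> R) (k : R) :
  0 <= k -> has_ubound (g @` A) -> (forall t, A t -> f t <= k * g t) ->
  sup (f @` A) <= k * sup (g @` A).
Proof.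
move=> k0 ubg fg; have [->|/set0P[t0 At0]] := eqVneq A set0.
  by rewrite !image_set0 sup0 mulr0.
apply: ge_sup => [|_ [t At <-]]; first by exists (f t0), t0.
apply: le_trans (fg t At) _; apply: (ler_wpM2l k0).
by apply: ub_le_sup; [exact: ubg | exists t].
Qed.

(* Locked: conversion problems on the unfolded [powR] are very expensive. *)
HB.lock Definition lpnorm2 {R : realType} (p a b : R) : R :=
  powR (powR a p + powR b p) p^-1.

Section PowerMean.
Context {R : realType}.
Implicit Types a b x y p q r : R.

Lemma powRKV x r : 0 <= x -> r != 0 -> powR (powR x r) r^-1 = x.
Proof. by move=> x0 r0; rewrite -powRrM mulfV // powRr1. Qed.

Lemma lpnorm2_ge0 p a b : 0 <= lpnorm2 p a b.
Proof. by rewrite lpnorm2.unlock powR_ge0. Qed.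

Lemma lpnorm2_gt0 p a b : 0 <= a -> 0 <= b -> 0 < a + b -> 0 < lpnorm2 p a b.
Proof.
move=> a0 b0 ab; rewrite lpnorm2.unlock; apply: powR_gt0.
have [a_eq0 | a_neq0] := eqVneq a 0.
  by rewrite a_eq0 add0r in ab; rewrite ltr_wpDl ?powR_ge0 ?powR_gt0.
by rewrite ltr_wpDr ?powR_ge0 // powR_gt0 // lt0r a_neq0.
Qed.

Lemma lpnorm2_1 a b : 0 <= a -> 0 <= b -> lpnorm2 1 a b = a + b.
Proof. by move=> a0 b0; rewrite lpnorm2.unlock invr1 !powRr1 // addr_ge0. Qed.

Lemma lpnorm2_diag p a : 0 <= a -> p != 0 -> lpnorm2 p a a = powR 2 p^-1 * a.
Proof.
move=> a0 p0; rewrite lpnorm2.unlock -mulr2n -[_ *+ 2]mulr_natl.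
by rewrite powRM ?powR_ge0 // powRKV.
Qed.

Lemma ler_lpnorm2 p a b a' b' : 0 < p -> 0 <= a -> 0 <= b -> a <= a' -> b <= b' ->
  lpnorm2 p a b <= lpnorm2 p a' b'.
Proof.
move=> p0 a0 b0 aa' bb'; have a'0 := le_trans a0 aa'; have b'0 := le_trans b0 bb'.
rewrite lpnorm2.unlock.
apply: ge0_ler_powR; rewrite ?nnegrE ?invr_ge0 ?(ltW p0) ?addr_ge0 ?powR_ge0 //.
by apply: lerD; apply: ge0_ler_powR; rewrite ?nnegrE ?(ltW p0).
Qed.

(* With [s] the [l^r] norm, [a, b <= s] gives [a^p = a^r a^(p-r) <= a^r s^(p-r)]. *)
Lemma lpnorm2_nonincreasing r p a b : 0 < r -> r <= p -> 0 <= a -> 0 <= b ->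
  lpnorm2 p a b <= lpnorm2 r a b.
Proof.
move=> r0 rp a0 b0; have p0 := lt_le_trans r0 rp.
set s := lpnorm2 r a b; have s0 : 0 <= s := lpnorm2_ge0 r a b.
have sr : powR s r = powR a r + powR b r.
  by rewrite /s lpnorm2.unlock -powRrM mulVf ?(lt0r_neq0 r0) // powRr1 // addr_ge0 ?powR_ge0.
have le_s x : 0 <= x -> powR x r <= powR s r -> x <= s.
  by move=> x0; apply: contra_le => /gt0_ltr_powR; apply; rewrite ?nnegrE.
have powR_split x : powR x p = powR x r * powR x (p - r).
  by rewrite -powRD subrKC // gt_eqF.
have a_le_s : a <= s by apply: le_s; rewrite // sr lerDl powR_ge0.
have b_le_s : b <= s by apply: le_s; rewrite // sr lerDr powR_ge0.
have pow_sum_le : powR a p + powR b p <= powR s p.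
  rewrite (powR_split a) (powR_split b) (powR_split s) sr mulrDl.
  by apply: lerD; apply: ler_wpM2l; rewrite ?powR_ge0 //;
    apply: ge0_ler_powR; rewrite ?nnegrE // subr_ge0.
rewrite -[X in _ <= X](@powRKV s p); [|exact: s0|exact: lt0r_neq0].
rewrite lpnorm2.unlock.
apply: ge0_ler_powR; rewrite ?nnegrE ?invr_ge0 ?(ltW p0) ?powR_ge0 //.
by rewrite addr_ge0 ?powR_ge0.
Qed.

Lemma powR_add_le x y q : 1 <= q -> 0 <= x -> 0 <= y ->
  powR (x + y) q <= powR 2 (q - 1) * (powR x q + powR y q).
Proof.
move=> q1 x0 y0.
have half_ge0 : 0 <= 2^-1 :> R by rewrite invr_ge0.
have half_le1 : 2^-1 <= 1 :> R by rewrite invf_le1 ?ler1n.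
have nneg2 (z : R) : 0 <= z -> 2 * z \in `[0, +oo[%classic.
  by move=> z0; rewrite inE /= in_itv /= andbT mulr_ge0.
have := convex_powR q1 (Itv01 half_ge0 half_le1) (nneg2 x x0) (nneg2 y y0).
rewrite convRE [X in X `^ _ <= _ -> _]convRE /= /unstable.onem.
have -> : 1 - 2^-1 = 2^-1 :> R by rewrite {1}(splitr 1) div1r addrK.
rewrite !mulKf ?pnatr_eq0 // => /le_trans; apply.
rewrite powRB ?pnatr_eq0 ?implybT // powRr1 // !powRM // mulrDr.
by rewrite !mulrA [_ / 2]mulrC.
Qed.

Lemma lpnorm2_le_powR2 r p a b : 1 <= r -> r <= p -> 0 <= a -> 0 <= b ->
  lpnorm2 r a b <= powR 2 (r^-1 - p^-1) * lpnorm2 p a b.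
Proof.
move=> r1 rp a0 b0; have r0 := lt_le_trans ltr01 r1; have p0 := lt_le_trans r0 rp.
set q := p / r; have q1 : 1 <= q by rewrite /q ler_pdivlMr // mul1r.
have powRq x : 0 <= x -> powR (powR x r) q = powR x p.
  by move=> x0; rewrite -powRrM /q mulrC divfK // lt0r_neq0.
have := powR_add_le (powR a r) (powR b r) q q1 (powR_ge0 _ _) (powR_ge0 _ _).
rewrite !powRq // => h.
rewrite lpnorm2.unlock (_ : r^-1 = q * p^-1); last first.
  by rewrite /q mulrAC mulfV ?mul1r // lt0r_neq0.
rewrite (_ : q * p^-1 - p^-1 = (q - 1) * p^-1); last by rewrite mulrBl mul1r.
rewrite (powRrM _ q) (powRrM 2) -powRM ?powR_ge0 ?addr_ge0 ?powR_ge0 //.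
apply: ge0_ler_powR; rewrite ?nnegrE ?invr_ge0 ?(ltW p0) ?powR_ge0 //.
by rewrite mulr_ge0 ?addr_ge0 ?powR_ge0.
Qed.

Section Ratio.
Variables (d a b : R).
Hypotheses (a0 : 0 <= a) (b0 : 0 <= b) (d0 : 0 <= d) (dab : d <= a + b).

Lemma div_lpnorm2_nondecreasing r p : 1 <= r -> r <= p ->
  d / lpnorm2 r a b <= d / lpnorm2 p a b.
Proof.
move=> r1 rp; have [->|d_neq0] := eqVneq d 0; first by rewrite !mul0r.
have ab0 : 0 < a + b by apply: lt_le_trans dab; rewrite lt0r d_neq0.
have lp_gt0 q : 0 < lpnorm2 q a b by exact: lpnorm2_gt0.
apply: (ler_wpM2l d0); rewrite lef_pV2; [|by rewrite posrE lp_gt0..].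
exact: lpnorm2_nonincreasing (lt_le_trans ltr01 r1) rp a0 b0.
Qed.

Lemma div_lpnorm2_le_powR2 r p : 1 <= r -> r <= p ->
  d / lpnorm2 p a b <= powR 2 (r^-1 - p^-1) * (d / lpnorm2 r a b).
Proof.
move=> r1 rp; have [->|d_neq0] := eqVneq d 0; first by rewrite !mul0r mulr0.
have ab0 : 0 < a + b by apply: lt_le_trans dab; rewrite lt0r d_neq0.
have lp_gt0 q : 0 < lpnorm2 q a b by exact: lpnorm2_gt0.
rewrite mulrCA; apply: (ler_wpM2l d0).
rewrite -[X in X <= _]div1r ler_pdivrMr ?lp_gt0 // mulrAC ler_pdivlMr ?lp_gt0 // mul1r.
exact: lpnorm2_le_powR2.
Qed.

Lemma div_lpnorm2_le p : 1 <= p -> d / lpnorm2 p a b <= powR 2 (1 - p^-1).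
Proof.
move=> p1; apply: (le_trans (div_lpnorm2_le_powR2 1 p (lexx 1) p1)).
rewrite invr1 -[X in _ <= X]mulr1 ler_wpM2l ?powR_ge0 // lpnorm2_1 //.
have [->|ab_neq0] := eqVneq (a + b) 0; first by rewrite invr0 mulr0 ler01.
by rewrite ler_pdivrMr ?mul1r // lt0r ab_neq0 addr_ge0.
Qed.

Lemma div_lpnorm2_ge p eps : 0 < p -> 0 < d -> 0 <= eps ->
  a <= (1 + eps) * (d / 2) -> b <= (1 + eps) * (d / 2) ->
  powR 2 (1 - p^-1) / (1 + eps) <= d / lpnorm2 p a b.
Proof.
move=> p0 d_gt0 eps0 am bm; set m := (1 + eps) * (d / 2).
have m0 : 0 < m by rewrite mulr_gt0 ?divr_gt0 // ltr_wpDr.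
have lp_gt0 : 0 < lpnorm2 p a b by apply: lpnorm2_gt0; rewrite // (lt_le_trans d_gt0).
have lp_le : lpnorm2 p a b <= powR 2 p^-1 * m.
  by rewrite -lpnorm2_diag ?(ltW m0) ?lt0r_neq0 //; exact: ler_lpnorm2.
have -> : powR 2 (1 - p^-1) / (1 + eps) = d / (powR 2 p^-1 * m).
  have pw0 : powR 2 p^-1 != 0 :> R by rewrite lt0r_neq0 // powR_gt0.
  rewrite powRB ?pnatr_eq0 ?implybT // powRr1 // /m.
  by field; rewrite pw0 !lt0r_neq0 // ltr_wpDr.
apply: (ler_wpM2l d0); rewrite lef_pV2; first exact: lp_le.
  by rewrite posrE mulr_gt0 ?powR_gt0.
by rewrite posrE.
Qed.

End Ratio.

End PowerMean.

Section Euclid.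
Context {R : realType} {n : nat}.

Lemma edist_ge0 (x y : 'rV[R]_n) : 0 <= edist x y.
Proof. exact: sqrtr_ge0. Qed.

Lemma edist_sym (x y : 'rV[R]_n) : edist x y = edist y x.
Proof. by rewrite /edist; congr Num.sqrt; apply: eq_bigr => i _; rewrite -sqrrN opprB. Qed.

Lemma lagrange_identity (u v : 'I_n -> R) :
  \sum_i \sum_j (u i * v j - u j * v i) ^+ 2 =
  2 * ((\sum_i u i ^+ 2) * (\sum_i v i ^+ 2) - (\sum_i u i * v i) ^+ 2).
Proof.
have AB : (\sum_i u i ^+ 2) * (\sum_i v i ^+ 2) = \sum_i \sum_j u i ^+ 2 * v j ^+ 2.
  by rewrite mulr_suml; apply: eq_bigr => i _; rewrite mulr_sumr.
have C2 : (\sum_i u i * v i) ^+ 2 = \sum_i \sum_j u i * v i * (u j * v j).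
  by rewrite expr2 mulr_suml; apply: eq_bigr => i _; rewrite mulr_sumr.
have AB' : (\sum_i u i ^+ 2) * (\sum_i v i ^+ 2) = \sum_i \sum_j u j ^+ 2 * v i ^+ 2.
  by rewrite AB exchange_big.
rewrite mulrBr mulr_natl mulr2n {1}AB AB' C2 mulr_sumr -!big_split -sumrB /=.
apply: eq_bigr => i _; rewrite mulr_sumr -!big_split -sumrB /=.
by apply: eq_bigr => j _; ring.
Qed.

Lemma cauchy_schwarz (u v : 'I_n -> R) :
  \sum_i u i * v i <= Num.sqrt (\sum_i u i ^+ 2) * Num.sqrt (\sum_i v i ^+ 2).
Proof.
have : 0 <= \sum_i \sum_j (u i * v j - u j * v i) ^+ 2.
  by apply: sumr_ge0 => i _; apply: sumr_ge0 => j _; exact: sqr_ge0.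
rewrite lagrange_identity pmulr_rge0 // subr_ge0 => CS.
rewrite -sqrtrM ?sumr_ge0 // => [|i _]; last exact: sqr_ge0.
apply: le_trans (ler_norm _) _; rewrite -sqrtr_sqr ler_sqrt //.
by rewrite mulr_ge0 ?sumr_ge0 // => i _; exact: sqr_ge0.
Qed.

Lemma minkowski2 (u v : 'I_n -> R) :
  Num.sqrt (\sum_i (u i + v i) ^+ 2) <=
  Num.sqrt (\sum_i u i ^+ 2) + Num.sqrt (\sum_i v i ^+ 2).
Proof.
have sq0 (w : 'I_n -> R) : 0 <= \sum_i w i ^+ 2 by apply: sumr_ge0 => i _; exact: sqr_ge0.
rewrite -[X in _ <= X]ger0_norm ?addr_ge0 ?sqrtr_ge0 // -sqrtr_sqr ler_sqrt ?sqr_ge0 //.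
have -> : \sum_i (u i + v i) ^+ 2 =
    \sum_i u i ^+ 2 + 2 * \sum_i u i * v i + \sum_i v i ^+ 2.
  by rewrite mulr_sumr -!big_split /=; apply: eq_bigr => i _; ring.
rewrite sqrrD !sqr_sqrtr // lerD2r lerD2l mulr_natl.
by apply: ler_wMn2r; exact: cauchy_schwarz.
Qed.

Lemma edist_triangle (x y z : 'rV[R]_n) : edist x y <= edist x z + edist z y.
Proof.
rewrite /edist (eq_bigr (fun i => ((x ord0 i - z ord0 i) + (z ord0 i - y ord0 i)) ^+ 2)).
  exact: minkowski2.
by move=> i _; rewrite addrA subrK.
Qed.

End Euclid.

Section BoundaryRatio.
Context {R : realType} {n : nat}.
Implicit Types (G : set 'rV[R]_n) (p r : R).

Definition bratio p (z1 z2 z : 'rV[R]_n) : R :=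
  edist z1 z2 / lpnorm2 p (edist z1 z) (edist z z2).

Lemma bGpE G p (z1 z2 : 'rV[R]_n) : bGp G p z1 z2 = sup (bratio p z1 z2 @` bdry G).
Proof. by rewrite /bGp /bratio lpnorm2.unlock. Qed.

Lemma sGE G z1 z2 : sG G z1 z2 = bGp G 1 z1 z2.
Proof.
rewrite bGpE /sG; congr sup; apply: eq_imagel => z _.
by rewrite /bratio lpnorm2_1 ?edist_ge0.
Qed.

Lemma bratio_nondecreasing r p z1 z2 z : 1 <= r -> r <= p ->
  bratio r z1 z2 z <= bratio p z1 z2 z.
Proof. by apply: div_lpnorm2_nondecreasing; rewrite ?edist_ge0 ?edist_triangle. Qed.

Lemma bratio_le_powR2 r p z1 z2 z : 1 <= r -> r <= p ->
  bratio p z1 z2 z <= powR 2 (r^-1 - p^-1) * bratio r z1 z2 z.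
Proof. by apply: div_lpnorm2_le_powR2; rewrite ?edist_ge0 ?edist_triangle. Qed.

Lemma bratio_le p z1 z2 z : 1 <= p -> bratio p z1 z2 z <= powR 2 (1 - p^-1).
Proof. by apply: div_lpnorm2_le; rewrite ?edist_ge0 ?edist_triangle. Qed.

Lemma bratio_ubound G p z1 z2 : 1 <= p -> has_ubound (bratio p z1 z2 @` bdry G).
Proof. by move=> p1; exists (powR 2 (1 - p^-1)) => _ [z _ <-]; exact: bratio_le. Qed.

Lemma bGp_nondecreasing G r p z1 z2 : 1 <= r -> r <= p ->
  bGp G r z1 z2 <= bGp G p z1 z2.
Proof.
move=> r1 rp; rewrite !bGpE -[X in _ <= X]mul1r.
apply: sup_image_le_mul => [//||z _]; first exact: bratio_ubound (le_trans r1 rp).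
by rewrite mul1r bratio_nondecreasing.
Qed.

Lemma bGp_le_powR2 G r p z1 z2 : 1 <= r -> r <= p ->
  bGp G p z1 z2 <= powR 2 (r^-1 - p^-1) * bGp G r z1 z2.
Proof.
move=> r1 rp; rewrite !bGpE.
apply: sup_image_le_mul => [||z _]; [exact: powR_ge0 | exact: bratio_ubound|].
exact: bratio_le_powR2.
Qed.

Lemma bGp_le G p z1 z2 : 1 <= p -> bGp G p z1 z2 <= powR 2 (1 - p^-1).
Proof.
move=> p1; rewrite bGpE; have [->|/set0P[z0 Gz0]] := eqVneq (bdry G) set0.
  by rewrite image_set0 sup0 powR_ge0.
apply: ge_sup => [|_ [z _ <-]]; first by exists (bratio p z1 z2 z0), z0.
exact: bratio_le.
Qed.

Lemma bratio_le_bGp G p z1 z2 z : 1 <= p -> bdry G z ->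
  bratio p z1 z2 z <= bGp G p z1 z2.
Proof.
by move=> p1 Gz; rewrite bGpE; apply: ub_le_sup; [exact: bratio_ubound | exists z].
Qed.

Lemma bratio_ge_midpoint p eps z1 z2 z : 1 <= p -> 0 < edist z1 z2 -> 0 <= eps ->
  edist z1 z <= (1 + eps) * (edist z1 z2 / 2) ->
  edist z z2 <= (1 + eps) * (edist z1 z2 / 2) ->
  powR 2 (1 - p^-1) / (1 + eps) <= bratio p z1 z2 z.
Proof.
move=> p1; apply: div_lpnorm2_ge; rewrite ?edist_ge0 ?edist_triangle //.
exact: lt_le_trans ltr01 p1.
Qed.

End BoundaryRatio.

Section Geometry.
Context {R : realType} {n : nat}.

Lemma coord_le_edist (x y : 'rV[R]_n) i : `|x ord0 i - y ord0 i| <= edist x y.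
Proof.
rewrite /edist -sqrtr_sqr ler_sqrt; last by apply: sumr_ge0 => j _; exact: sqr_ge0.
by rewrite (bigD1 i) //= lerDl; apply: sumr_ge0 => j _; exact: sqr_ge0.
Qed.

Lemma ball_edist (x y : 'rV[R]_n) e : edist x y < e -> ball x e y.
Proof.
move=> xy; split; first exact: le_lt_trans (edist_ge0 x y) xy.
by move=> i j; rewrite (ord1 i); exact: le_lt_trans (coord_le_edist x y j) xy.
Qed.

Lemma open_edist {G : set 'rV[R]_n} {x} : open G -> G x ->
  exists2 e, 0 < e & forall y, edist x y < e -> G y.
Proof.
rewrite openE => oG Gx; have /nbhs_ballP[e e0 sub] := oG x Gx.
by exists e => // y xy; apply: sub; exact: ball_edist.
Qed.

Lemma edist_line (x w : 'rV[R]_n) t : edist x (x + t *: (w - x)) = `|t| * edist x w.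
Proof.
rewrite /edist -sqrtr_sqr -sqrtrM ?sqr_ge0 //; congr Num.sqrt.
by rewrite mulr_sumr; apply: eq_bigr => i _; rewrite !mxE; ring.
Qed.

Lemma segment_meets_bdry {A : set 'rV[R]_n} {x w} : A x -> ~ A w ->
  exists2 t, 0 <= t <= 1 & bdry A (x + t *: (w - x)).
Proof.
move=> Ax Aw; pose f := cst x \+ (fun t : R => t *: (w - x)).
have cf : continuous f.
  by move=> t; apply: continuousD; [exact: cst_continuous | exact: scalel_continuous].
have cseg : connected (f @` `[0, 1]%classic).
  apply: connected_continuous_connected; first exact: segment_connected.
  exact: continuous_subspaceT.
have [] := connected_meets_bdry A _ cseg.
- exists x; split => //; exists 0; first by rewrite /= in_itv /= lexx ler01.
  by rewrite /f /= scale0r addr0.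
- exists w; split => //; exists 1; first by rewrite /= in_itv /= lexx ler01.
  by rewrite /f /= scale1r addrC subrK.
by move=> _ [[t t01 <-] bdt]; exists t => //; rewrite /= in_itv /= in t01.
Qed.

Lemma bdry_near_inball (G : set 'rV[R]_n) eta : open G -> G !=set0 -> G != setT ->
  0 < eta -> exists x r z, [/\ 0 < r, forall y, edist x y < r -> G y, bdry G z,
                              r <= edist x z & edist x z < (1 + eta) * r].
Proof.
move=> oG [x Gx] GT eta0.
have [w Gw] : exists w, ~ G w.
  apply: contrapT => allG; move/eqP: GT; apply; apply/seteqP; split => // y _.
  by apply: contrapT => Gy; apply: allG; exists y.
pose C := [set edist x y | y in ~` G].
have hC : has_inf C.
  by split; [exists (edist x w), w | exists 0 => _ [y _ <-]; exact: edist_ge0].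
set r := inf C.
have r_le y : ~ G y -> r <= edist x y by move=> Gy; apply: (ge_inf hC.2); exists y.
have [e e0 ball_e] := open_edist oG Gx.
have r0 : 0 < r.
  apply: lt_le_trans e0 _; apply: lb_le_inf hC.1 _ => _ [y Gy <-].
  by rewrite leNgt; apply/negP => /ball_e.
have [_ [w' Gw' <-] xw'] := inf_adherent (mulr_gt0 eta0 r0) hC.
have [t /andP[t0 t1] bz] := segment_meets_bdry Gx Gw'.
have Gz : ~ G (x + t *: (w' - x)) by case: bz => _; rewrite (iffLR (interior_id G) oG).
exists x, r, (x + t *: (w' - x)); split => //.
- by move=> y xy; apply: contrapT => /r_le; rewrite leNgt xy.
- exact: r_le.
rewrite edist_line ger0_norm // mulrDl mul1r.
exact: le_lt_trans (ler_piMl (edist_ge0 _ _) t1) xw'.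
Qed.

End Geometry.

Section Planar.
Context {R : realType}.
Implicit Types (x z : 'rV[R]_2) (b : R).
Local Notation i1 := (lift ord0 (ord0 : 'I_1)).

Lemma sqr_edist2 (y z : 'rV[R]_2) :
  edist y z ^+ 2 = (y ord0 ord0 - z ord0 ord0) ^+ 2 + (y ord0 i1 - z ord0 i1) ^+ 2.
Proof.
rewrite /edist sqr_sqrtr; first by rewrite big_ord_recl big_ord1.
by apply: sumr_ge0 => i _; exact: sqr_ge0.
Qed.

Definition rot90 (v : 'rV[R]_2) : 'rV[R]_2 :=
  \row_j (if j == ord0 then - v ord0 i1 else v ord0 ord0).

Definition flank x z b : 'rV[R]_2 := z - b ^+ 2 *: (z - x) + b *: rot90 (z - x).

Lemma edist_flank_center x z b :
  edist x (flank x z b) ^+ 2 = (1 - b ^+ 2 + b ^+ 4) * edist x z ^+ 2.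
Proof. by rewrite !sqr_edist2 !mxE /=; ring. Qed.

Lemma edist_flank_bdry x z b :
  edist z (flank x z b) ^+ 2 = b ^+ 2 * (1 + b ^+ 2) * edist x z ^+ 2.
Proof. by rewrite !sqr_edist2 !mxE /=; ring. Qed.

Lemma edist_flankN x z b :
  edist (flank x z b) (flank x z (- b)) ^+ 2 = (2 * b) ^+ 2 * edist x z ^+ 2.
Proof. by rewrite !sqr_edist2 !mxE /=; ring. Qed.

Lemma bdry_almost_midpoint (G : set 'rV[R]_2) eps : open G -> G !=set0 -> G != setT ->
  0 < eps -> exists z1 z2 z, [/\ G z1, G z2, bdry G z, 0 < edist z1 z2 &
    edist z1 z <= (1 + eps) * (edist z1 z2 / 2) /\
    edist z z2 <= (1 + eps) * (edist z1 z2 / 2)].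
Proof.
move=> oG G0 GT eps0; pose b := Num.min eps 2^-1; set h := b ^+ 2.
have b0 : 0 < b by rewrite /b lt_min eps0 invr_gt0 ltr0n.
have [b_eps b_half] : b <= eps /\ b <= 2^-1 by rewrite /b !ge_min !lexx orbT.
have h0 : 0 < h by rewrite exprn_gt0.
have h_eps : h <= eps by rewrite /h expr2; nra.
have h_quarter : h <= 4^-1 by rewrite /h expr2; nra.
have h4 : 0 < h / 4 by rewrite divr_gt0.
have [x [r [z [r0 inball bz rz zr]]]] := bdry_near_inball G (h / 4) oG G0 GT h4.
set D := edist x z in rz zr; have D0 : 0 < D := lt_le_trans r0 rz.
have flank_in b' : b' ^+ 2 = h -> G (flank x z b').
  move=> hb; apply: inball; rewrite -ltr_sqr ?nnegrE ?edist_ge0 ?(ltW r0) //.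
  rewrite edist_flank_center -/D (_ : b' ^+ 4 = h ^+ 2); last by rewrite -hb -exprM.
  have : D ^+ 2 < ((1 + h / 4) * r) ^+ 2.
    by rewrite ltr_sqr ?nnegrE ?(ltW D0) // (le_trans (ltW D0) (ltW zr)).
  have : (1 - h + h ^+ 2) * (1 + h / 4) ^+ 2 < 1 by nra.
  nra.
have hbN : (- b) ^+ 2 = h by rewrite sqrrN.
have d12 : edist (flank x z b) (flank x z (- b)) = 2 * b * D.
  have := congr1 Num.sqrt (edist_flankN x z b).
  by rewrite -exprMn !sqrtr_sqr !ger0_norm ?edist_ge0 // !mulr_ge0 ?(ltW b0) ?(ltW D0).
have flank_mid b' : b' ^+ 2 = h ->
    edist z (flank x z b') <= (1 + eps) * (edist (flank x z b) (flank x z (- b)) / 2).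
  move=> hb; rewrite d12 (_ : 2 * b * D / 2 = b * D); last by field.
  rewrite -ler_sqr ?nnegrE ?edist_ge0 ?mulr_ge0 ?addr_ge0
    ?(ltW eps0) ?(ltW b0) ?(ltW D0) //.
  rewrite edist_flank_bdry hb -/D !exprMn -/h.
  nra.
exists (flank x z b), (flank x z (- b)), z; split => //.
- exact: flank_in.
- exact: flank_in (- b) hbN.
- by rewrite d12 !mulr_gt0.
by split; [rewrite edist_sym; exact: flank_mid | exact: flank_mid (- b) hbN].
Qed.

Lemma sup_bGp_planar (G : set 'rV[R]_2) p : proper_domain G -> 1 <= p ->
  sup [set bGp G p z1 z2 | z1 in G & z2 in G] = powR 2 (1 - p^-1).
Proof.
move=> [G0 oG _ GT] p1; set c := powR 2 (1 - p^-1); set S := [set _ | _ in _ & _ in _].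
have c0 : 0 < c by apply: powR_gt0.
have ubS : ubound S c by move=> _ [z1 _ [z2 _ <-]]; exact: bGp_le.
have S0 : S !=set0 by case: G0 => x Gx; exists (bGp G p x x), x => //; exists x.
apply/le_anti/andP; split; first exact: ge_sup.
apply/ler_addgt0Pr => e e0; rewrite -lerBlDr.
have ec0 : 0 < e / c by rewrite divr_gt0.
have [z1 [z2 [z [Gz1 Gz2 bz d0 [mid1 mid2]]]]] :=
  bdry_almost_midpoint G (e / c) oG G0 GT ec0.
have c_approx : c - e <= c / (1 + e / c).
  rewrite ler_pdivlMr ?ltr_wpDr ?(ltW ec0) //.
  rewrite (_ : (c - e) * (1 + e / c) = c - e ^+ 2 / c); last by field; rewrite lt0r_neq0.
  by rewrite gerBl divr_ge0 ?sqr_ge0 ?(ltW c0).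
apply: (le_trans c_approx).
apply: (le_trans (bratio_ge_midpoint p (e / c) z1 z2 z p1 d0 (ltW ec0) mid1 mid2)).
apply: (le_trans (bratio_le_bGp G p z1 z2 z p1 bz)).
by apply: ub_le_sup; [exists c | exists z1 => //; exists z2].
Qed.

End Planar.

Theorem theorem3p6 (R : realType) (n : nat) (G : set 'rV[R]_n) :
  proper_domain G ->
  (forall (z1 z2 : 'rV[R]_n) (p r : R), G z1 -> G z2 -> 1 <= r -> r < p ->
     bGp G r z1 z2 <= bGp G p z1 z2 /\
     bGp G p z1 z2 <= powR 2 (r^-1 - p^-1) * bGp G r z1 z2) /\
  (forall (z1 z2 : 'rV[R]_n) (p : R), G z1 -> G z2 -> 1 <= p ->
     sG G z1 z2 <= bGp G p z1 z2 /\
     bGp G p z1 z2 <= powR 2 (1 - p^-1) * sG G z1 z2) /\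
  (n = 2%N -> forall p : R, 1 <= p ->
     sup [set bGp G p z1 z2 | z1 in G & z2 in G] = powR 2 (1 - p^-1)).
Proof.
move=> domG; split; [|split].
- move=> z1 z2 p r _ _ r1 /ltW rp.
  by split; [exact: bGp_nondecreasing | exact: bGp_le_powR2].
- move=> z1 z2 p _ _ p1; rewrite sGE; split; first exact: bGp_nondecreasing.
  by have := bGp_le_powR2 G 1 p z1 z2 (lexx 1) p1; rewrite invr1.
- by move=> n2; subst n => p p1; exact: sup_bGp_planar.
Qed.
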